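(* Suppose $\sigma_n,\sigma\in D(\mathbb R^d,X)$. Then $d_S(\sigma_n,\sigma)\to0$ if and only if there exist $\lambda_n\in\Lambda$ such that $\gamma(\lambda_n)\to0$ and $r(\sigma_n(x),\sigma(\lambda_n(x)))\to0$ uniformly over $x$ in compact subsets of $\mathbb R^d$.
   Context: $(X,r)$ is a complete separable metric space with $r\le1$; $d\ge1$. Order on $\mathbb R^d$: $x\le y$ iff $x_i\le y_i$ for all $i$; $|x|_\infty=\max_i|x_i|$. $D=D(\mathbb R^d,X)$ is the set of functions $\sigma:\mathbb R^d\to X$ such that for every bounded rectangle $[a,b)$ and $\varepsilon>0$ there are finite partitions $a_i=s_i^0<\dots<s_i^{m_i}=b_i$ of each coordinate axis with $\sup\{r(\sigma(x),\sigma(y)): s_i^{k_i}\le x_i,y_i<s_i^{k_i+1}\ (1\le i\le d)\}\le\varepsilon$ for every multi-index $k$. For $u>0$, $[x]_u=((x_1\wedge u)\vee(-u),\dots,(x_d\wedge u)\vee(-u))$. $\Lambda$ is the set of maps $\lambda(x)=(\lambda_1(x_1),\dots,\lambda_d(x_d))$ with each $\lambda_i:\mathbb R\to\mathbb R$ a bijective strictly increasing Lipschitz function, such that $\gamma(\lambda)=\gamma_0(\lambda)+\gamma_1(\lambda)<\infty$, where $\gamma_0(\lambda)=\sum_{i=1}^d\sup_{s\ne t}\big|\log\frac{\lambda_i(t)-\lambda_i(s)}{t-s}\big|$ and $\gamma_1(\lambda)=\int_0^\infty e^{-u}\big(1\wedge\sup_{x\in\mathbb R^d}|[\lambda(x)]_u-[x]_u|_\infty\big)du$.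 For $\rho,\sigma\in D$, $\lambda\in\Lambda$, $u>0$: $d(\rho,\sigma,\lambda,u)=\sup_x r(\rho([x]_u),\sigma([\lambda(x)]_u))$, and $d_S(\rho,\sigma)=\inf_{\lambda\in\Lambda}\{\gamma(\lambda)\vee\int_0^\infty e^{-u}d(\rho,\sigma,\lambda,u)du\}$. *)

(* R : realType plays the role of the real line,
   points of R^d are row vectors 'rV[R]_d (coordinates x ord0 i), so that
   the usual (normed) topology, hence [compact], is available on R^d. *)
From mathcomp Require Import all_boot all_order all_algebra.
From mathcomp Require Import all_classical all_reals all_analysis.
Set Implicit Arguments.
Unset Strict Implicit.
Unset Printing Implicit Defensive.
Import Order.TTheory GRing.Theory Num.Theory.
Import numFieldTopology.Exports numFieldNormedType.Exports.
Local Open Scope classical_set_scope.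
Local Open Scope ring_scope.

Section Skorokhod.
Variables (R : realType) (d : nat).

Definition sup_norm (x : 'rV[R]_d) : R := \big[Num.max/0]_(i < d) `|x ord0 i|.

Definition clip (u : R) (x : 'rV[R]_d) : 'rV[R]_d :=
  \row_(i < d) Num.max (Num.min (x ord0 i) u) (- u).

Definition tchange (lam : 'I_d -> R -> R) (x : 'rV[R]_d) : 'rV[R]_d :=
  \row_(i < d) lam i (x ord0 i).

Definition gamma0 (lam : 'I_d -> R -> R) : \bar R :=
  (\sum_(i < d)
     ereal_sup [set e : \bar R | exists s t : R, s != t /\
                  e = (`| ln ((lam i t - lam i s) / (t - s)) |)%:E])%E.

Definition gamma1 (lam : 'I_d -> R -> R) : \bar R :=
  (\int[lebesgue_measure]_(u in [set u : R | (0 < u)%R])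
     ((expR (- u))%:E *
      Order.min 1%E
        (ereal_sup [set (sup_norm (clip u (tchange lam x) - clip u x))%:E
                   | x in [set: 'rV[R]_d]])))%E.

Definition gamma (lam : 'I_d -> R -> R) : \bar R := (gamma0 lam + gamma1 lam)%E.

Definition in_Lambda (lam : 'I_d -> R -> R) : Prop :=
  (forall i, bijective (lam i)) /\
  (forall i (s t : R), s < t -> lam i s < lam i t) /\
  (forall i, exists L : R, forall s t : R,
       `|lam i t - lam i s| <= L * `|t - s|) /\
  (gamma lam < +oo)%E.

Variables (X : Type) (r : X -> X -> R).

Definition in_D (s : 'rV[R]_d -> X) : Prop :=
  forall (a b : 'rV[R]_d), (forall i, a ord0 i < b ord0 i) ->
  forall eps : R, 0 < eps ->
  exists (m : 'I_d -> nat) (p : 'I_d -> nat -> R),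
    (forall i, p i 0%N = a ord0 i /\ p i (m i) = b ord0 i /\
               (forall k, (k < m i)%N -> p i k < p i k.+1)) /\
    (forall k : 'I_d -> nat, (forall i, (k i < m i)%N) ->
     forall x y : 'rV[R]_d,
       (forall i, p i (k i) <= x ord0 i < p i (k i).+1) ->
       (forall i, p i (k i) <= y ord0 i < p i (k i).+1) ->
       r (s x) (s y) <= eps).

Definition dist_u (rho sig : 'rV[R]_d -> X) (lam : 'I_d -> R -> R) (u : R)
  : \bar R :=
  ereal_sup [set (r (rho (clip u x)) (sig (clip u (tchange lam x))))%:E
            | x in [set: 'rV[R]_d]].

Definition dS (rho sig : 'rV[R]_d -> X) : \bar R :=
  ereal_inf [set Order.max (gamma lam)
                   (\int[lebesgue_measure]_(u in [set u : R | (0 < u)%R])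
                      ((expR (- u))%:E * dist_u rho sig lam u))%E
            | lam in in_Lambda].

Definition is_metric : Prop :=
  (forall x y, r x y = 0 <-> x = y) /\
  (forall x y, r x y = r y x) /\
  (forall x y z, r x z <= r x y + r y z).

Definition complete_metric : Prop :=
  forall u : nat -> X,
    (forall eps : R, 0 < eps -> exists N, forall m n, (N <= m)%N -> (N <= n)%N ->
                                   r (u m) (u n) < eps) ->
    exists l : X, forall eps : R, 0 < eps -> exists N, forall n, (N <= n)%N ->
                                   r (u n) l < eps.

Definition separable_metric : Prop :=
  exists q : nat -> X, forall (x : X) (eps : R), 0 < eps -> exists n, r x (q n) < eps.

End Skorokhod.

From mathcomp Require Import all_boot all_order all_algebra.
From mathcomp Require Import all_classical all_reals all_analysis.
From mathcomp Require Import lra measurable_realfun exponential_distribution.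
Import Order.TTheory GRing.Theory Num.Theory.
Import numFieldTopology.Exports numFieldNormedType.Exports.
Import HBNNSimple.
Local Open Scope classical_set_scope.
Local Open Scope ring_scope.
Set Implicit Arguments.
Unset Strict Implicit.

(* (=>) Take time changes [lamn] that are almost optimal in the infimum defining
   [d_S]; then gamma(lamn) -> 0 and int e^{-u} d(sn, sig, lamn, u) du -> 0.
   Smallness of gamma_1 forces [lamn] to converge to the identity uniformly on
   compact sets, and smallness of the integral provides, for a compact K inside
   [-T, T]^d, a clipping level u in [T + 1, T + 2] with d(sn, sig, lamn, u)
   small; at that level clipping moves neither x in K nor lamn(x).
   (<=) Off the countable set of grid points of the cadlag [sig], [sig] is
   uniformly continuous along pairs of points that differ only near the
   clipping boundary +-u; [lamn([x]_u)] and [[lamn(x)]_u] form such a pair since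
   [lamn] is increasing and close to the identity. Hence d(sn, sig, lamn, u) -> 0
   for almost every u, and dominated convergence gives d_S(sn, sig) -> 0. *)

Section nonneg_ereal_sequences.
Variable R : realType.
Implicit Type u : nat -> \bar R.

Lemma cvge0_eventually_lt u : u @ \oo --> 0%E ->
  forall e : R, 0 < e -> \forall n \near \oo, (u n < e%:E)%E.
Proof.
move=> /fine_cvgP [ufin ucvg] e e0.
move/cvgrPdist_lt: ucvg => /(_ e e0) ucvg.
near=> n.
have fn : u n \is a fin_num by near: n.
rewrite -(fineK fn) lte_fin.
have : `|0 - fine (u n)| < e by near: n.
by rewrite sub0r normrN; exact: le_lt_trans (ler_norm _).
Unshelve. all: by end_near.
Qed.

Lemma nneg_cvge0 u : (forall n, (0 <= u n)%E) ->
  (forall e : R, 0 < e -> \forall n \near \oo, (u n <= e%:E)%E) ->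
  u @ \oo --> 0%E.
Proof.
move=> u0 ule.
have ufin n e : (u n <= e%:E)%E -> u n \is a fin_num.
  by move=> une; rewrite ge0_fin_numE // (le_lt_trans une) // ltry.
apply/fine_cvgP; split; first exact: filterS (ufin ^~ 1) (ule 1 ltr01).
apply/cvgrPdist_le => e e0.
apply: filterS (ule e e0) => n une.
rewrite sub0r normrN ger0_norm; last by rewrite -lee_fin fineK // (ufin _ _ une).
by rewrite -lee_fin fineK // (ufin _ _ une).
Qed.

Lemma squeeze_cvge0 u v : (forall n, (0 <= u n <= v n)%E) -> v @ \oo --> 0%E ->
  u @ \oo --> 0%E.
Proof.
move=> uv vcvg; apply: nneg_cvge0 => [n|e e0]; first by have /andP[] := uv n.
apply: filterS (cvge0_eventually_lt vcvg e0) => n vne.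
by have /andP[_ /le_trans] := uv n; apply; exact: ltW.
Qed.

Lemma maxe_cvge0 u v : (forall n, (0 <= u n)%E) -> (forall n, (0 <= v n)%E) ->
  (fun n => Order.max (u n) (v n)) @ \oo --> 0%E <->
  u @ \oo --> 0%E /\ v @ \oo --> 0%E.
Proof.
move=> u0 v0; split => [mcvg|[ucvg vcvg]].
  by split; apply: squeeze_cvge0 mcvg => n; rewrite ?u0 ?v0 le_max lexx ?orbT.
apply: nneg_cvge0 => [n|e e0]; first by rewrite le_max u0.
apply: filterS2 (cvge0_eventually_lt ucvg e0) (cvge0_eventually_lt vcvg e0).
by move=> n une vne; rewrite ge_max !ltW.
Qed.

End nonneg_ereal_sequences.

Section lower_integral.
Context d (T : measurableType d) (R : realType) (mu : {measure set T -> \bar R}).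

Lemma ge0_le_integral_sub (A D : set T) (f g : T -> \bar R) :
  (forall x, A x -> (0 <= g x)%E) -> (forall x, D x -> (0 <= f x)%E) ->
  (forall x, A x -> D x /\ (g x <= f x)%E) ->
  (\int[mu]_(x in A) g x <= \int[mu]_(x in D) f x)%E.
Proof.
move=> g0 f0 gf.
rewrite [leLHS]ge0_integralE // [leRHS]ge0_integralE //.
apply: ereal_sup_le => _ [h hg <-]; exists h => // x.
apply: le_trans (hg x) _; rewrite /patch; case: ifPn; rewrite ?inE => Ax.
  by have [Dx gfx] := gf x Ax; rewrite mem_set.
by case: ifPn; rewrite ?inE // => Dx; exact: f0.
Qed.

Variables (D : set T) (f : nat -> T -> \bar R) (g : T -> \bar R).
Hypotheses (mD : measurable D) (intg : mu.-integrable D g).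
Hypotheses (f0 : forall n x, D x -> (0 <= f n x)%E)
  (fg : forall n x, D x -> (f n x <= g x)%E).
Hypothesis fcvg : {ae mu, forall x, D x -> f ^~ x @ \oo --> 0%E}.

Let g0 x : D x -> (0 <= g x)%E.
Proof. by move=> Dx; exact: le_trans (f0 0 Dx) (fg 0 Dx). Qed.

Let fD_le_gD n (h : {nnsfun T >-> R}) :
  (forall x, ((h x)%:E <= (f n \_ D) x)%E) -> forall x, ((h x)%:E <= (g \_ D) x)%E.
Proof.
move=> hf x; apply: le_trans (hf x) _; rewrite /patch.
by case: ifPn; rewrite ?inE // => Dx; exact: fg.
Qed.

Let sintegralE (h : {nnsfun T >-> R}) : sintegral mu h = (\int[mu]_x (h x)%:E)%E.
Proof. by rewrite integral_nnsfun // patch_setT. Qed.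

Let integral_fin_num n : (\int[mu]_(x in D) f n x)%E \is a fin_num.
Proof.
rewrite ge0_fin_numE; last exact: integral_ge0 (f0 n).
apply: le_lt_trans (_ : _ <= \int[mu]_(x in D) g x)%E _; last first.
  by rewrite -ge0_fin_numE ?integral_ge0 ?integrable_fin_num.
rewrite (ge0_integralE _ (f0 n)); apply: ge_ereal_sup => _ [h hf <-].
rewrite sintegralE [leRHS]integral_mkcond.
apply: ge0_le_integral => //.
- by move=> x _; rewrite lee_fin.
- exact/measurable_EFinP.
- exact: measurable_int ((integrable_mkcond _ mD).1 intg).
- by move=> x _; exact: fD_le_gD hf x.
Qed.

(* [f n] need not be measurable: each [\int f n] is approximated from below by
   the integral of a simple function, and dominated convergence applies to those. *)
Lemma lower_dominated_cvg0 : (fun n => \int[mu]_(x in D) f n x)%E @ \oo --> 0%E.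
Proof.
have approx n : exists h : {nnsfun T >-> R},
    (forall x, ((h x)%:E <= (f n \_ D) x)%E) /\
    (\int[mu]_(x in D) f n x - (n.+1%:R^-1)%:E < \int[mu]_x (h x)%:E)%E.
  have := integral_fin_num n; rewrite (ge0_integralE _ (f0 n)) => ffin.
  have n1 : 0 < n.+1%:R^-1 :> R by rewrite invr_gt0.
  have [_ [h hf <-] hlt] := ub_ereal_sup_adherent n1 ffin.
  by exists h; split => //; move: hlt; rewrite sintegralE -(ge0_integralE _ (f0 n)).
have /choice [h /all_and2 [hf hlow]] := approx.
have hcvg0 : {ae mu, forall x, setT x -> (fun n => (h n x)%:E) @ \oo --> (cst 0%E) x}.
  apply: filterS fcvg => x fx _.
  apply: nneg_cvge0 => [n|e e0]; first by rewrite lee_fin.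
  have [Dx|nDx] := pselect (D x).
    apply: filterS (cvge0_eventually_lt (fx Dx) e0) => n fne.
    by apply: le_trans (hf n x) _; rewrite /patch mem_set // ltW.
  apply: nearW => n; apply: le_trans (hf n x) _.
  by rewrite /patch memNset // lee_fin ltW.
have hdom : {ae mu, forall x n, setT x -> (`|(h n x)%:E| <= (g \_ D) x)%E}.
  by apply: aeW => x n _; rewrite gee0_abs ?lee_fin //; exact: fD_le_gD (hf n) x.
have mh n : measurable_fun setT (fun x => (h n x)%:E) by exact/measurable_EFinP.
have [_ _] := dominated_convergence measurableT mh (measurable_cst _) hcvg0
  ((integrable_mkcond _ mD).1 intg) hdom.
rewrite integral0 => hcvg.
apply: nneg_cvge0 => [n|e e0]; first exact: integral_ge0 (f0 n).
have e20 : 0 < e / 2 by rewrite divr_gt0.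
near=> n.
have : (\int[mu]_(x in D) f n x < (e / 2)%:E + (n.+1%:R^-1)%:E)%E.
  rewrite -lteBlDr //; apply: lt_trans (hlow n) _.
  by near: n; exact: cvge0_eventually_lt hcvg _ e20.
move/ltW/le_trans; apply; rewrite -EFinD lee_fin [leRHS](splitr e) lerD2l ltW //.
by near: n; exact: near_infty_natSinv_lt (PosNum e20).
Unshelve. all: by end_near.
Qed.

End lower_integral.

Section exponential_weight.
Variable R : realType.
Local Notation mu := (@lebesgue_measure R).

Lemma exp_weighted_integral_lt_witness (f : R -> \bar R) (b c : R) : 0 < b -> 0 <= c ->
  (forall u, 0 < u -> (0 <= f u)%E) ->
  (\int[mu]_(u in [set u : R | (0 < u)%R]) ((expR (- u))%:E * f u)
     < (c * expR (- (b + 1)))%:E)%E ->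
  exists u, b <= u <= b + 1 /\ (f u < c%:E)%E.
Proof.
move=> b0 c0 f0; apply: contraPP => /forallNP fbig; apply/negP; rewrite -leNgt.
have fge u : b <= u <= b + 1 -> (c%:E <= f u)%E.
  by move=> bu; rewrite leNgt; apply/negP => fuc; apply: (fbig u).
have -> : (c * expR (- (b + 1)))%:E =
    (\int[mu]_(u in `[b, (b + 1)%R]) (cst (c * expR (- (b + 1)))%:E) u)%E.
  rewrite integral_cst //= lebesgue_measure_itv /= lte_fin ltrDl ltr01.
  by rewrite -EFinD addrAC subrr add0r mule1.
apply: ge0_le_integral_sub.
- by move=> u _ /=; rewrite lee_fin mulr_ge0 // expR_ge0.
- by move=> u u0; rewrite mule_ge0 // ?lee_fin ?expR_ge0 // f0.
move=> u; rewrite /= in_itv /= => /andP[bu ub]; split; first exact: lt_le_trans bu.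
rewrite EFinM muleC; apply: lee_pmul; rewrite ?lee_fin ?expR_ge0 //.
  by rewrite ler_expR lerN2.
by apply: fge; rewrite bu ub.
Qed.

Lemma exp_weighted_integral_cvg0 (F : nat -> R -> \bar R) :
  (forall n u, 0 < u -> (0 <= F n u)%E /\ (F n u <= 1)%E) ->
  {ae mu, forall u, 0 < u -> F ^~ u @ \oo --> 0%E} ->
  (fun n => \int[mu]_(u in [set u : R | (0 < u)%R]) ((expR (- u))%:E * F n u))%E
    @ \oo --> 0%E.
Proof.
move=> F01 Fcvg.
pose f n := (fun u => (expR (- u))%:E * F n u)%E \_ [set u : R | (0 < u)%R].
have f0 n u : (0 <= f n u)%E.
  rewrite /f /patch; case: ifPn; rewrite ?inE // => u0.
  by rewrite mule_ge0 ?lee_fin ?expR_ge0 ?(F01 n u u0).1.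
have fle n u : 0 < u -> (f n u <= F n u)%E.
  move=> u0; rewrite /f /patch mem_set // -[leRHS]mul1e lee_wpmul2r ?(F01 n u u0).1 //.
  by rewrite lee_fin -expR0 ler_expR oppr_le0 ltW.
have -> : (fun n => \int[mu]_(u in [set u : R | (0 < u)%R]) ((expR (- u))%:E * F n u))%E
    = (fun n => \int[mu]_u f n u)%E by apply/funext => n; exact: integral_mkcond.
apply: (@lower_dominated_cvg0 _ _ _ mu setT f _ measurableT
  (integrable_exponential_pdf ltr01)).
- by move=> n u _; exact: f0.
- move=> n u _ /=; rewrite /f /patch; case: ifPn; rewrite ?inE => u0; last first.
    by rewrite lee_fin exponential_pdf_ge0.
  rewrite exponential_pdfE ?(ltW u0) // mul1r mulN1r.
  by rewrite -[leRHS]mule1 lee_wpmul2l ?lee_fin ?expR_ge0 ?(F01 n u u0).2.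
case: Fcvg => N [mN N0 Nsub]; exists N; split => // u /= nfu.
apply: Nsub => Fu; apply: nfu => _; apply: nneg_cvge0 => [n|e e0]; first exact: f0.
have [u0|u0] := ltP 0 u.
  apply: filterS (cvge0_eventually_lt (Fu u0) e0) => n Fne.
  exact: le_trans (fle n u u0) (ltW Fne).
apply: nearW => n; rewrite /f /patch memNset ?lee_fin ?(ltW e0) //=.
by apply/negP; rewrite -leNgt.
Qed.

End exponential_weight.

Section time_change.
Variables (R : realType) (d : nat).
Implicit Types (lam : 'I_d -> R -> R) (x : 'rV[R]_d).

Definition clamp (u a : R) : R := Num.max (Num.min a u) (- u).

Lemma clipE u x i : clip u x ord0 i = clamp u (x ord0 i).
Proof. by rewrite mxE. Qed.

Lemma clipBE u x y i :
  (clip u x - clip u y) ord0 i = clamp u (x ord0 i) - clamp u (y ord0 i).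
Proof. by rewrite !mxE. Qed.

Lemma tchangeE lam x i : tchange lam x ord0 i = lam i (x ord0 i).
Proof. by rewrite mxE. Qed.

Variant clamp_spec (u a : R) : R -> Type :=
  | ClampIn of - u <= a <= u : clamp_spec u a a
  | ClampHi of u < a : clamp_spec u a u
  | ClampLo of a < - u : clamp_spec u a (- u).

Lemma clampP u a : 0 <= u -> clamp_spec u a (clamp u a).
Proof.
move=> u0; rewrite /clamp; have [au|ua] := leP a u.
  by have [ua'|au'] := leP (- u) a; constructor; rewrite ?ua' ?au.
by rewrite max_l; [constructor | lra].
Qed.

Lemma clamp_id u a : `|a| <= u -> clamp u a = a.
Proof. by rewrite ler_norml => /andP[ua au]; rewrite /clamp (min_l au) (max_l ua). Qed.

Lemma clip_id u x : (forall i, `|x ord0 i| <= u) -> clip u x = x.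
Proof. by move=> xu; apply/rowP => i; rewrite clipE clamp_id. Qed.

Lemma norm_clamp_le u a : 0 <= u -> `|clamp u a| <= u.
Proof.
move=> u0; case: (clampP a u0) => [|_|_]; first by rewrite ler_norml.
  by rewrite ger0_norm.
by rewrite normrN ger0_norm.
Qed.

Lemma clamp_near_lt u a y c : `|y| + c <= u -> `|clamp u a - y| < c -> `|a - y| < c.
Proof.
move=> yc ac; have c0 : 0 < c := le_lt_trans (normr_ge0 _) ac.
have := ler_norm y; have := ler_norm (- y); rewrite normrN => y1 y2.
have u0 : 0 <= u by lra.
move: ac; case: (clampP a u0) => [_ //|_|_]; rewrite ltr_norml => /andP[h1 h2]; lra.
Qed.

Lemma sup_norm_ge0 x : 0 <= sup_norm x.
Proof. exact: bigmax_ge_id. Qed.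

Lemma le_coord_sup_norm x i : `|x ord0 i| <= sup_norm x.
Proof. by rewrite /sup_norm (bigD1 i) //= le_max lexx. Qed.

Lemma gamma0_ge0 lam : (0 <= gamma0 lam)%E.
Proof.
apply: sume_ge0 => i _; apply: le_trans (ereal_sup_ubound _); last first.
  by exists 0, 1; split; [rewrite eq_sym oner_eq0 | reflexivity].
by rewrite lee_fin.
Qed.

Lemma gamma1_ge0 lam : (0 <= gamma1 lam)%E.
Proof.
apply: integral_ge0 => u _; rewrite mule_ge0 ?lee_fin ?expR_ge0 // le_min lee01 /=.
apply: (le_trans _ (ereal_sup_ubound _)); last by exists 0.
by rewrite lee_fin sup_norm_ge0.
Qed.

Lemma gamma_ge0 lam : (0 <= gamma lam)%E.
Proof. by rewrite adde_ge0 ?gamma0_ge0 ?gamma1_ge0. Qed.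

Lemma gamma1_le_gamma lam : (gamma1 lam <= gamma lam)%E.
Proof. by rewrite leeDr ?gamma0_ge0. Qed.

Lemma gamma1_lt_witness lam b c : 0 < b -> 0 <= c -> c <= 1 ->
  (gamma1 lam < (c * expR (- (b + 1)))%:E)%E ->
  exists u, b <= u <= b + 1 /\
    forall x, sup_norm (clip u (tchange lam x) - clip u x) < c.
Proof.
move=> b0 c0 c1 small.
pose S u := ereal_sup [set (sup_norm (clip u (tchange lam x) - clip u x))%:E
                      | x in [set: 'rV[R]_d]].
have S0 u : (0 <= S u)%E.
  apply: (le_trans _ (ereal_sup_ubound _)); last by exists 0.
  by rewrite lee_fin sup_norm_ge0.
have minS0 u : (0 <= Order.min 1%E (S u))%E by rewrite le_min lee01 S0.
have [u [bu]] := @exp_weighted_integral_lt_witness R (fun u => Order.min 1%E (S u))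
  b c b0 c0 (fun u _ => minS0 u) small.
rewrite gt_min => /orP[|Sc]; first by rewrite lte_fin ltNge c1.
exists u; split => // x; rewrite -lte_fin; apply: le_lt_trans Sc.
by apply: ereal_sup_ubound; exists x.
Qed.

Lemma gamma_lt_near_id lam U c : 0 <= U -> 0 < c -> c <= 1 ->
  (gamma lam < (c * expR (- (U + 1 + 1)))%:E)%E ->
  forall i t, `|t| <= U -> `|lam i t - t| < c.
Proof.
move=> U0 c0 c1 small i t tU.
have U1 : 0 < U + 1 by lra.
have [u [/andP[Uu _] lam_clip]] :=
  gamma1_lt_witness U1 (ltW c0) c1 (le_lt_trans (gamma1_le_gamma lam) small).
have := le_lt_trans (le_coord_sup_norm _ i) (lam_clip (const_mx t)).
rewrite clipBE tchangeE !mxE (@clamp_id u t); last by lra.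
by apply: clamp_near_lt; lra.
Qed.

Lemma gamma_cvg0_near_id (lamn : nat -> 'I_d -> R -> R) :
  (fun n => gamma (lamn n)) @ \oo --> 0%E ->
  forall U c, 0 <= U -> 0 < c ->
  \forall n \near \oo, forall i t, `|t| <= U -> `|lamn n i t - t| < c.
Proof.
move=> gcvg U c U0 c0.
have c'0 : 0 < Num.min c 1 by rewrite lt_min c0 ltr01.
have c'1 : Num.min c 1 <= 1 by rewrite ge_min lexx orbT.
apply: filterS (cvge0_eventually_lt gcvg (mulr_gt0 c'0 (expR_gt0 (- (U + 1 + 1)))))
  => n small i t tU.
by apply: lt_le_trans (gamma_lt_near_id U0 c'0 c'1 small i tU) _; rewrite ge_min lexx.
Qed.

(* How the coordinates of [lam([x]_u)] and [[lam(x)]_u] are related when [lam]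
   is increasing and close to the identity (see [clamp_tchange_close]). *)
Definition clip_close (u del p q : R) : Prop :=
  [/\ `|p| <= u + 1, `|q| <= u + 1 &
      p = q \/ (`|p - u| < del /\ `|q - u| < del) \/
      (`|p + u| < del /\ `|q + u| < del)].

Lemma clamp_tchange_close (l : R -> R) u c del a :
  0 < u -> 0 <= c -> c <= 1 -> c <= u -> c < del ->
  {homo l : s t / s < t} -> (forall t, `|t| <= u + 1 -> `|l t - t| <= c) ->
  clip_close u del (l (clamp u a)) (clamp u (l a)).
Proof.
move=> u0 c0 c1 cu cdel lmono lnear.
have lnear' t : `|t| <= u + 1 -> l t - c <= t <= l t + c.
  by move/lnear; rewrite ler_norml => /andP[? ?]; apply/andP; split; lra.
have /andP[lu1 lu2] : l u - c <= u <= l u + c.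
  by apply: lnear'; rewrite ger0_norm; lra.
have /andP[lmu1 lmu2] : l (- u) - c <= - u <= l (- u) + c.
  by apply: lnear'; rewrite normrN ger0_norm; lra.
have clamp_le := norm_clamp_le _ (ltW u0).
have uu1 : u <= u + 1 by lra.
split.
- have /andP[m1 m2] := lnear' _ (le_trans (clamp_le a) uu1).
  by move: (clamp_le a); rewrite !ler_norml => /andP[? ?]; apply/andP; split; lra.
- exact: le_trans (clamp_le _) uu1.
rewrite !ltr_norml.
case: (clampP a (ltW u0)) => [/andP[ua au]|ua|au].
- have /andP[la1 la2] : l a - c <= a <= l a + c.
    by apply: lnear'; rewrite ler_norml; lra.
  case: (clampP (l a) (ltW u0)) => [_|lau|lau]; [by left | right; left | right; right].
    by split; apply/andP; split; lra.
  by split; apply/andP; split; lra.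
- have lua := lmono _ _ ua.
  case: (clampP (l a) (ltW u0)) => [/andP[? ?]|lau|lau]; last lra.
    by right; left; split; apply/andP; split; lra.
  by right; left; split; apply/andP; split; lra.
- have lau' := lmono _ _ au.
  case: (clampP (l a) (ltW u0)) => [/andP[? ?]|lau|lau]; first 2 last.
  + by right; right; split; apply/andP; split; lra.
  + by right; right; split; apply/andP; split; lra.
  + lra.
Qed.

Lemma compact_coord_bounded (K : set 'rV[R]_d) : compact K ->
  exists T, 0 <= T /\ forall x, K x -> forall i, `|x ord0 i| <= T.
Proof.
move=> /compact_bounded [M [Mr KM]].
exists (`|M| + 1); split; first by rewrite addr_ge0.
move=> x Kx i; apply: le_trans (KM (`|M| + 1) _ x Kx).
  by rewrite [leRHS]/Num.norm /= mx_normrE (bigD1 (ord0, i)) //= le_max lexx.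
by rewrite (le_lt_trans (real_ler_norm Mr)) // ltrDl.
Qed.

End time_change.

Section grids.
Variables (R : realType) (d : nat).

Lemma partition_cell (m : nat) (p : nat -> R) (t : R) :
  p 0%N <= t -> t < p m -> exists2 k, (k < m)%N & p k <= t < p k.+1.
Proof.
move=> p0t tpm; apply: contrapT => nocell.
suff pt j : (j <= m)%N -> p j <= t by move: tpm; rewrite ltNge pt.
elim: j => [//|j IHj] jm; rewrite leNgt; apply/negP => tpj; apply: nocell.
by exists j => //; rewrite tpj andbT IHj // ltnW.
Qed.

Lemma cell_close_mem (a b s t v del : R) :
  del <= `|a - v| -> del <= `|b - v| -> a <= s < b ->
  `|s - v| < del -> `|t - v| < del -> a <= t < b.
Proof.
rewrite !ler_normr !ltr_norml => /orP[h1|h1] /orP[h2|h2] /andP[s1 s2]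
  /andP[s3 s4] /andP[t1 t2]; apply/andP; split; lra.
Qed.

Lemma grid_gap_gt0 (m : 'I_d -> nat) (p : 'I_d -> nat -> R) u :
  (forall i j, p i j != u /\ p i j != - u) ->
  exists2 del, 0 < del &
    forall i j, (j <= m i)%N -> del <= `|p i j - u| /\ del <= `|p i j + u|.
Proof.
move=> avoid.
pose gap i j := Num.min `|p i j - u| `|p i j + u|.
exists (\big[Num.min/1]_(i < d) \big[Num.min/1]_(j < (m i).+1) gap i j).
  apply: (big_ind (fun x => 0 < x)) => [|x y|i _]; rewrite ?lt_min ?ltr01 //.
    by move=> -> ->.
  apply: (big_ind (fun x => 0 < x)) => [|x y|j _]; rewrite ?lt_min ?ltr01 //.
    by move=> -> ->.
  have [/negPf pu /negPf pmu] := avoid i j.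
  by rewrite !normr_gt0 subr_eq0 addr_eq0 pu pmu.
move=> i j jm; apply/andP; rewrite -le_min.
rewrite (bigD1 i) //= ge_min (bigD1 (Ordinal (jm : (j < (m i).+1)%N))) //= ge_min.
by rewrite lexx.
Qed.

Lemma grid_clip_close_cell (m : 'I_d -> nat) (p : 'I_d -> nat -> R) u T del
    (x y : 'rV[R]_d) :
  u + 1 < T -> (forall i, p i 0%N = - T /\ p i (m i) = T) ->
  (forall i j, (j <= m i)%N -> del <= `|p i j - u| /\ del <= `|p i j + u|) ->
  (forall i, clip_close u del (x ord0 i) (y ord0 i)) ->
  exists2 k : 'I_d -> nat, (forall i, (k i < m i)%N) &
    forall i, p i (k i) <= x ord0 i < p i (k i).+1 /\
              p i (k i) <= y ord0 i < p i (k i).+1.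
Proof.
move=> uT pT gap xy.
suff /choice [k kP] : forall i, exists k, (k < m i)%N /\
    p i k <= x ord0 i < p i k.+1 /\ p i k <= y ord0 i < p i k.+1.
  by exists k => i; case: (kP i).
move=> i; have [xu _ xyi] := xy i; have [p0 pm] := pT i.
move: xu; rewrite ler_norml => /andP[xu1 xu2].
have [k km xk] := @partition_cell (m i) (p i) (x ord0 i) ltac:(lra) ltac:(lra).
exists k; split => //; split => //.
have [gk gk'] := gap i k (ltnW km); have [gk1 gk1'] := gap i k.+1 km.
case: xyi => [<- //|[[xnear ynear]|[xnear ynear]]].
  exact: cell_close_mem gk gk1 xk xnear ynear.
by apply: (@cell_close_mem _ _ (x ord0 i) _ (- u) del); rewrite ?opprK.
Qed.

End grids.

Section skorokhod.
Variables (R : realType) (d : nat) (X : Type) (r : X -> X -> R).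
Local Notation mu := (@lebesgue_measure R).

Definition fine_grid (s : 'rV[R]_d -> X) (T eps : R) (m : 'I_d -> nat)
    (p : 'I_d -> nat -> R) : Prop :=
  (forall i, p i 0%N = - T /\ p i (m i) = T) /\
  (forall k : 'I_d -> nat, (forall i, (k i < m i)%N) -> forall x y : 'rV[R]_d,
     (forall i, p i (k i) <= x ord0 i < p i (k i).+1) ->
     (forall i, p i (k i) <= y ord0 i < p i (k i).+1) -> r (s x) (s y) <= eps).

Lemma in_D_grids (sig : 'rV[R]_d -> X) : in_D r sig ->
  exists G : nat -> nat -> ('I_d -> nat) * ('I_d -> nat -> R),
    forall N k, fine_grid sig (N%:R + 1) k.+1%:R^-1 (G N k).1 (G N k).2.
Proof.
move=> sigD.
suff /choice [G GP] : forall Nk : nat * nat,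
    exists mp, fine_grid sig (Nk.1%:R + 1) Nk.2.+1%:R^-1 mp.1 mp.2.
  by exists (fun N k => G (N, k)) => N k; exact: GP (N, k).
move=> [N k] /=.
pose a : 'rV[R]_d := const_mx (- (N%:R + 1)).
pose b : 'rV[R]_d := const_mx (N%:R + 1).
have ab i : a ord0 i < b ord0 i by rewrite !mxE; have := ler0n R N; lra.
have k1 : 0 < k.+1%:R^-1 :> R by rewrite invr_gt0.
have [m [p [pab osc]]] := sigD _ _ ab _ k1.
exists (m, p); split => [i /=|//]; have [p0 [pm _]] := pab i.
by rewrite p0 pm !mxE.
Qed.

(* The exceptional levels are the +-grid points of the countably many grids
   [in_D_grids]; away from them, points that are [clip_close] share a cell. *)
Lemma in_D_clip_close (sig : 'rV[R]_d -> X) : in_D r sig ->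
  {ae mu, forall u, forall eps, 0 < eps -> exists2 del, 0 < del &
    forall x y : 'rV[R]_d, (forall i, clip_close u del (x ord0 i) (y ord0 i)) ->
      r (sig x) (sig y) <= eps}.
Proof.
move=> /in_D_grids [G GP].
pose g (z : nat * nat * 'I_d * nat * bool) : R :=
  let v := (G z.1.1.1.1 z.1.1.1.2).2 z.1.1.2 z.1.2 in if z.2 then v else - v.
pose B := \bigcup_(z in [set: nat * nat * 'I_d * nat * bool]) [set g z].
have cB : countable B.
  by apply: bigcup_countable; [exact: countableP | move=> z _; exact: countable1].
exists B; split; first exact: countable_measurable.
  exact: countable_lebesgue_measure0.
move=> u /= nuP; apply: contrapT => nBu; apply: nuP => eps eps0.
have [N _ uN] := nbhs_infty_gtr u; have {}uN := uN N (leqnn N).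
have [k _ keps] := near_infty_natSinv_lt (PosNum eps0); have {}keps := keps k (leqnn k).
have [pT osc] := GP N k.
have avoid i j : (G N k).2 i j != u /\ (G N k).2 i j != - u.
  split; apply/eqP => pu; apply: nBu.
    by exists ((((N, k), i), j), true) => //=; rewrite /g /= pu.
  by exists ((((N, k), i), j), false) => //=; rewrite /g /= pu opprK.
have [del del0 gap] := grid_gap_gt0 (G N k).1 avoid.
exists del => // x y xy.
have uN1 : u + 1 < N%:R + 1 by rewrite ltrD2r.
have [kk kkm xyk] := grid_clip_close_cell uN1 pT gap xy.
apply: le_trans (ltW keps).
by apply: (osc kk kkm) => i; have [] := xyk i.
Qed.

Hypothesis rmet : is_metric r.
Hypothesis r_le1 : forall x y, r x y <= 1.

Lemma metric_ge0 x y : 0 <= r x y.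
Proof.
have [r0 [rC rtri]] := rmet.
have := rtri x y x; rewrite (proj2 (r0 x x) erefl) (rC y x) => rxx.
by rewrite -(pmulr_rge0 _ (ltr0Sn _ 1)) mulr2n mulrDl !mul1r.
Qed.

Implicit Types (rho sig : 'rV[R]_d -> X) (lam : 'I_d -> R -> R).

Lemma dist_u_ge0 rho sig lam u : (0 <= dist_u r rho sig lam u)%E.
Proof.
apply: (le_trans _ (ereal_sup_ubound _)); last by exists 0.
by rewrite lee_fin metric_ge0.
Qed.

Lemma dist_u_le1 rho sig lam u : (dist_u r rho sig lam u <= 1)%E.
Proof. by apply: ge_ereal_sup => _ [x _ <-]; rewrite lee_fin. Qed.

Lemma dist_u_ub rho sig lam u x :
  ((r (rho (clip u x)) (sig (clip u (tchange lam x))))%:E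
     <= dist_u r rho sig lam u)%E.
Proof. by apply: ereal_sup_ubound; exists x. Qed.

Definition dist_int rho sig lam : \bar R :=
  (\int[mu]_(u in [set u : R | (0 < u)%R])
     ((expR (- u))%:E * dist_u r rho sig lam u))%E.

Lemma dS_ge0 rho sig : (0 <= dS r rho sig)%E.
Proof. by apply: le_ereal_inf_tmp => _ [lam _ <-]; rewrite le_max gamma_ge0. Qed.

Lemma dS_le rho sig lam : in_Lambda lam ->
  (dS r rho sig <= Order.max (gamma lam) (dist_int rho sig lam))%E.
Proof. by move=> lamL; apply: ereal_inf_lbound; exists lam. Qed.

Definition tchange_loc_unif (sn : nat -> 'rV[R]_d -> X) sig
    (lamn : nat -> 'I_d -> R -> R) : Prop :=
  forall K : set 'rV[R]_d, compact K -> forall eps : R, 0 < eps ->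
    \forall n \near \oo, forall x, K x -> r (sn n x) (sig (tchange (lamn n) x)) < eps.

Lemma dist_int_ge0 rho sig lam : (0 <= dist_int rho sig lam)%E.
Proof.
by apply: integral_ge0 => u _; rewrite mule_ge0 ?lee_fin ?expR_ge0 ?dist_u_ge0.
Qed.

Lemma dist_u_le_near rho sig lam (u c del e : R) :
  0 < u -> 0 <= c -> c <= 1 -> c <= u -> c < del ->
  (forall i, {homo lam i : s t / s < t}) ->
  (forall i t, `|t| <= u + 1 -> `|lam i t - t| <= c) ->
  (forall x : 'rV[R]_d, (forall i, `|x ord0 i| <= u) ->
     r (rho x) (sig (tchange lam x)) <= e) ->
  (forall x y : 'rV[R]_d, (forall i, clip_close u del (x ord0 i) (y ord0 i)) ->
     r (sig x) (sig y) <= e) ->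
  (dist_u r rho sig lam u <= (e + e)%:E)%E.
Proof.
move=> u0 c0 c1 cu cdel lmono lnear rho_near sig_close.
apply: ge_ereal_sup => _ [x _ <-]; rewrite lee_fin.
have [_ [_ rtri]] := rmet.
apply: le_trans (rtri _ (sig (tchange lam (clip u x))) _) _.
apply: lerD; first by apply: rho_near => i; rewrite clipE norm_clamp_le // ltW.
apply: sig_close => i; rewrite !tchangeE !clipE tchangeE.
exact: clamp_tchange_close u0 c0 c1 cu cdel (lmono i) (lnear i).
Qed.

Lemma dist_u_cvg0 sn sig (lamn : nat -> 'I_d -> R -> R) (u : R) :
  (forall n, in_Lambda (lamn n)) -> (fun n => gamma (lamn n)) @ \oo --> 0%E ->
  tchange_loc_unif sn sig lamn -> 0 < u ->
  (forall eps, 0 < eps -> exists2 del, 0 < del & forall x y : 'rV[R]_d,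
     (forall i, clip_close u del (x ord0 i) (y ord0 i)) -> r (sig x) (sig y) <= eps) ->
  (fun n => dist_u r (sn n) sig (lamn n) u) @ \oo --> 0%E.
Proof.
move=> lamL gcvg unif u0 sig_cont.
apply: nneg_cvge0 => [n|e e0]; first exact: dist_u_ge0.
have e20 : 0 < e / 2 by rewrite divr_gt0.
have [del del0 sig_close] := sig_cont _ e20.
pose c := Num.min (del / 2) (Num.min u 1).
have c0 : 0 < c by rewrite !lt_min divr_gt0 // u0 ltr01.
have cdel : c < del by rewrite /c gt_min; apply/orP; left; lra.
have cu : c <= u by rewrite /c !ge_min lexx orbT.
have c1 : c <= 1 by rewrite /c !ge_min lexx !orbT.
pose K := [set x : 'rV[R]_d | forall i, `[- u, u]%classic (x ord0 i)].
have Kc : compact K.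
  by apply: (@rV_compact _ _ (fun=> `[- u, u]%classic)) => i; exact: segment_compact.
have u1 : 0 <= u + 1 by lra.
have lnear_ev := gamma_cvg0_near_id gcvg u1 c0.
have sn_near_ev := unif K Kc _ e20.
near=> n.
have lnear : forall i t, `|t| <= u + 1 -> `|lamn n i t - t| < c by near: n.
have sn_near : forall x, K x -> r (sn n x) (sig (tchange (lamn n) x)) < e / 2.
  by near: n.
rewrite [in leRHS](splitr e).
apply: (dist_u_le_near u0 (ltW c0) c1 cu cdel (lamL n).2.1) => //.
- by move=> i t tu; exact/ltW/lnear.
- move=> x xu; apply/ltW/sn_near => i.
  by rewrite /= in_itv /= -ler_norml.
Unshelve. all: by end_near.
Qed.

Lemma tchange_dist_int_cvg0 sn sig (lamn : nat -> 'I_d -> R -> R) : in_D r sig ->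
  (forall n, in_Lambda (lamn n)) -> (fun n => gamma (lamn n)) @ \oo --> 0%E ->
  tchange_loc_unif sn sig lamn ->
  (fun n => dist_int (sn n) sig (lamn n)) @ \oo --> 0%E.
Proof.
move=> sigD lamL gcvg unif.
apply: exp_weighted_integral_cvg0 => [n u _|]; first by rewrite dist_u_ge0 dist_u_le1.
case: (in_D_clip_close sigD) => N [mN N0 Nsub]; exists N; split => // u /= ncvg.
apply: Nsub => sig_cont; apply: ncvg => u0.
exact: dist_u_cvg0 lamL gcvg unif u0 sig_cont.
Qed.

Lemma dS_cvg0_near_optimal sn sig : (fun n => dS r (sn n) sig) @ \oo --> 0%E ->
  exists2 lamn : nat -> 'I_d -> R -> R, (forall n, in_Lambda (lamn n)) &
    (fun n => Order.max (gamma (lamn n)) (dist_int (sn n) sig (lamn n))) @ \oo --> 0%E.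
Proof.
move=> dScvg.
have [N _ dSN] := cvge0_eventually_lt dScvg ltr01.
have near_opt n : (N <= n)%N -> exists2 lam, in_Lambda lam &
    (Order.max (gamma lam) (dist_int (sn n) sig lam)
       < dS r (sn n) sig + (n.+1%:R^-1)%:E)%E.
  move=> Nn; have dSfin : dS r (sn n) sig \is a fin_num.
    by rewrite ge0_fin_numE ?dS_ge0 // (lt_le_trans (dSN n Nn)) // leey.
  have : (dS r (sn n) sig < dS r (sn n) sig + (n.+1%:R^-1)%:E)%E.
    by rewrite lteDl // lte_fin invr_gt0.
  by move/ereal_inf_lt => [_ [lam lamL <-] lt]; exists lam.
have [lam0 lam0L _] := near_opt N (leqnn N).
have /choice [lamn lamnP] : forall n, exists lam, in_Lambda lam /\ ((N <= n)%N ->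
    (Order.max (gamma lam) (dist_int (sn n) sig lam)
       < dS r (sn n) sig + (n.+1%:R^-1)%:E)%E).
  move=> n; have [Nn|_] := leqP N n; last by exists lam0.
  by have [lam ? ?] := near_opt n Nn; exists lam.
exists lamn => [n|]; first by case: (lamnP n).
apply: nneg_cvge0 => [n|e e0]; first by rewrite le_max gamma_ge0.
have e20 : 0 < e / 2 by rewrite divr_gt0.
near=> n; apply/ltW/(lt_trans ((lamnP n).2 _)); first by near: n; exists N.
rewrite [e](splitr e) EFinD lteD //; first by near: n; exact: cvge0_eventually_lt.
by rewrite lte_fin; near: n; exact: near_infty_natSinv_lt (PosNum e20).
Unshelve. all: by end_near.
Qed.

Lemma dist_int_cvg0_loc_unif sn sig (lamn : nat -> 'I_d -> R -> R) :
  (fun n => gamma (lamn n)) @ \oo --> 0%E ->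
  (fun n => dist_int (sn n) sig (lamn n)) @ \oo --> 0%E ->
  tchange_loc_unif sn sig lamn.
Proof.
move=> gcvg icvg K Kc eps eps0.
have [T [T0 KT]] := compact_coord_bounded Kc.
have eps20 : 0 <= eps / 2 by rewrite divr_ge0 // ltW.
have T1 : 0 < T + 1 by lra.
have half0 : 0 < 2^-1 :> R by rewrite invr_gt0.
have lam_near_ev := gamma_cvg0_near_id gcvg T0 half0.
have small_ev := cvge0_eventually_lt icvg
  (mulr_gt0 (divr_gt0 eps0 (ltr0Sn R 1)) (expR_gt0 (- (T + 1 + 1)))).
near=> n => x Kx.
have lam_near : forall i t, `|t| <= T -> `|lamn n i t - t| < 2^-1 by near: n.
have small : (dist_int (sn n) sig (lamn n) < (eps / 2 * expR (- (T + 1 + 1)))%:E)%E.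
  by near: n.
have [u [/andP[Tu _] du]] :=
  exp_weighted_integral_lt_witness T1 eps20
    (fun u _ => dist_u_ge0 (sn n) sig (lamn n) u) small.
have x_in : clip u x = x by apply: clip_id => i; have := KT x Kx i; lra.
have lx_in : clip u (tchange (lamn n) x) = tchange (lamn n) x.
  apply: clip_id => i; rewrite tchangeE -[lamn n i _](subrK (x ord0 i)).
  apply: le_trans (ler_normD _ _) _.
  by have := lam_near i _ (KT x Kx i); have := KT x Kx i; lra.
have := le_lt_trans (dist_u_ub (sn n) sig (lamn n) u x) du.
by rewrite x_in lx_in lte_fin => rlt; lra.
Unshelve. all: by end_near.
Qed.

End skorokhod.

Theorem lemma10p1 (R : realType) (d : nat) (X : Type) (r : X -> X -> R)
  (hd : (0 < d)%N)
  (hmet : is_metric r) (hr1 : forall x y, r x y <= 1)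
  (hcomp : complete_metric r) (hsep : separable_metric r)
  (sn : nat -> 'rV[R]_d -> X) (sig : 'rV[R]_d -> X)
  (hsn : forall n, in_D r (sn n)) (hsig : in_D r sig) :
  ((fun n => dS r (sn n) sig) @ \oo --> 0%E) <->
  exists lamn : nat -> 'I_d -> R -> R,
    (forall n, in_Lambda (lamn n)) /\
    ((fun n => gamma (lamn n)) @ \oo --> 0%E) /\
    (forall K : set 'rV[R]_d, compact K ->
       forall eps : R, 0 < eps ->
       \forall n \near \oo, forall x, K x ->
         r (sn n x) (sig (tchange (lamn n) x)) < eps).
Proof.
split => [dScvg|[lamn [lamL [gcvg unif]]]].
  have [lamn lamL] := dS_cvg0_near_optimal dScvg.
  case/(maxe_cvge0 (fun n => gamma_ge0 (lamn n))
                   (fun n => dist_int_ge0 hmet (sn n) sig (lamn n))) => gcvg icvg.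
  exists lamn; split => //; split => //.
  exact: (dist_int_cvg0_loc_unif hmet gcvg icvg).
apply: (@squeeze_cvge0 _ _ (fun n =>
  Order.max (gamma (lamn n)) (dist_int r (sn n) sig (lamn n)))).
  by move=> n; rewrite dS_ge0 ?dS_le.
apply/(maxe_cvge0 (fun n => gamma_ge0 _) (fun n => dist_int_ge0 hmet _ _ _)).
split => //.
exact: (@tchange_dist_int_cvg0 _ _ _ _ hmet hr1 sn sig lamn hsig lamL gcvg unif).
Qed.
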